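(* Let $\xi:I\to\mathbb{R}^3$ be a smooth arclength-parametrized curve with curvature $k>0$ and torsion $\tau\neq0$ on $I$, and let $t_0\in I$. Then there exists $\delta>0$ such that for every $t\in I$ with $0<|t-t_0|<\delta$, the osculating circle of $\xi$ at $\xi(t_0)$ is disjoint from the osculating plane of $\xi$ at $\xi(t)$. In particular, for such $t$ the osculating circles of $\xi$ at $\xi(t_0)$ and at $\xi(t)$ are not linked.
   Context: The osculating plane of $\xi$ at $\xi(t)$ is $\xi(t)+\operatorname{span}(\mathbf{t}(t),\mathbf{n}(t))$, where $\mathbf{t}=\xi'$ and $\mathbf{n}=\xi''/k$. The osculating circle at $\xi(t)$ is the circle in this plane with center $\xi(t)+\frac1{k(t)}\mathbf{n}(t)$ and radius $1/k(t)$. *)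

From Stdlib Require Import Reals Lra.
From Coquelicot Require Import Coquelicot.
Open Scope R_scope.

Definition V3 : Type := (R * R * R)%type.
Definition vx (v : V3) : R := fst (fst v).
Definition vy (v : V3) : R := snd (fst v).
Definition vz (v : V3) : R := snd v.
Definition mkV (a b c : R) : V3 := (a, b, c).

Definition vadd (u v : V3) : V3 := mkV (vx u + vx v) (vy u + vy v) (vz u + vz v).
Definition vsub (u v : V3) : V3 := mkV (vx u - vx v) (vy u - vy v) (vz u - vz v).
Definition vscal (a : R) (v : V3) : V3 := mkV (a * vx v) (a * vy v) (a * vz v).
Definition vdot (u v : V3) : R := vx u * vx v + vy u * vy v + vz u * vz v.
Definition vnorm (v : V3) : R := sqrt (vdot v v).
Definition vcross (u v : V3) : V3 :=
  mkV (vy u * vz v - vz u * vy v)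
      (vz u * vx v - vx u * vz v)
      (vx u * vy v - vy u * vx v).

Definition cderiv (n : nat) (xi : R -> V3) (t : R) : V3 :=
  mkV (Derive_n (fun s => vx (xi s)) n t)
      (Derive_n (fun s => vy (xi s)) n t)
      (Derive_n (fun s => vz (xi s)) n t).

Definition in_interval (a b : Rbar) (t : R) : Prop := Rbar_lt a t /\ Rbar_lt t b.

Definition smooth_on (I : R -> Prop) (f : R -> R) : Prop :=
  forall (n : nat) (t : R), I t -> ex_derive_n f n t.

Definition smooth_curve_on (I : R -> Prop) (xi : R -> V3) : Prop :=
  smooth_on I (fun s => vx (xi s)) /\ smooth_on I (fun s => vy (xi s)) /\
  smooth_on I (fun s => vz (xi s)).

Definition arclength_on (I : R -> Prop) (xi : R -> V3) : Prop :=
  forall t, I t -> vnorm (cderiv 1 xi t) = 1.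

Definition tangent (xi : R -> V3) (t : R) : V3 := cderiv 1 xi t.
Definition curvature (xi : R -> V3) (t : R) : R := vnorm (cderiv 2 xi t).
Definition normal (xi : R -> V3) (t : R) : V3 :=
  vscal (/ curvature xi t) (cderiv 2 xi t).
Definition binormal (xi : R -> V3) (t : R) : V3 := vcross (tangent xi t) (normal xi t).
(* torsion tau = det(xi', xi'', xi''') / k^2, equivalently b' = - tau n *)
Definition torsion (xi : R -> V3) (t : R) : R :=
  vdot (vcross (cderiv 1 xi t) (cderiv 2 xi t)) (cderiv 3 xi t) / (curvature xi t) ^ 2.

Definition osc_plane (xi : R -> V3) (t : R) (p : V3) : Prop :=
  exists a b : R,
    p = vadd (xi t) (vadd (vscal a (tangent xi t)) (vscal b (normal xi t))).

Definition osc_center (xi : R -> V3) (t : R) : V3 :=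
  vadd (xi t) (vscal (/ curvature xi t) (normal xi t)).
Definition osc_circle (xi : R -> V3) (t : R) (p : V3) : Prop :=
  osc_plane xi t p /\ vnorm (vsub p (osc_center xi t)) = / curvature xi t.

From Stdlib Require Import Reals Lra Psatz.
From Coquelicot Require Import Coquelicot.
Open Scope R_scope.

(* Put s = t - t0 and expand xi, xi' and xi'' at t0 to third order with
   Lagrange remainders.  A point of the osculating circle at t0 is
   xi(t0) + a xi'(t0) + ((a^2 + b^2) / 2) xi''(t0), and it lies in the
   osculating plane at t iff det(p - xi(t), xi'(t), xi''(t)) = 0.  In this
   determinant the lowest-order terms add up to
   -(D s / 2) (a^2 + b^2 - a s + s^2 / 3), where D = det(xi', xi'', xi''')(t0)
   is nonzero because the torsion is; the quadratic form is at least
   (a^2 + b^2 + s^2) / 16, while all other terms are O(s^2 (a^2 + b^2 + s^2)).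
   So the determinant cannot vanish for small s <> 0. *)

Lemma in_interval_locally a b t : in_interval a b t -> locally t (in_interval a b).
Proof.
  intros [Ha Hb].
  assert (Heps : exists eps, 0 < eps /\
            forall y, Rabs (y - t) < eps -> in_interval a b y).
  { destruct a as [a| |]; destruct b as [b| |]; simpl in Ha, Hb; try tauto;
      unfold in_interval; simpl.
    - exists (Rmin (t - a) (b - t)); split; [apply Rmin_glb_lt; lra|].
      intros y Hy; apply Rabs_def2 in Hy.
      pose proof (Rmin_l (t - a) (b - t)); pose proof (Rmin_r (t - a) (b - t)).
      split; lra.
    - exists (t - a); split; [lra|].
      intros y Hy; apply Rabs_def2 in Hy; split; [lra|exact I].
    - exists (b - t); split; [lra|].
      intros y Hy; apply Rabs_def2 in Hy; split; [exact I|lra].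
    - exists 1; split; [lra|]; intros; split; exact I. }
  destruct Heps as [eps [Heps H]].
  exists (mkposreal eps Heps); intros y Hy; apply H, Hy.
Qed.

Lemma in_interval_between a b x y z :
  in_interval a b x -> in_interval a b y -> Rmin x y <= z <= Rmax x y ->
  in_interval a b z.
Proof.
  intros [H1 H2] [H3 H4] Hz.
  pose proof (Rmin_l x y); pose proof (Rmin_r x y).
  pose proof (Rmax_l x y); pose proof (Rmax_r x y).
  assert (Rmin x y = x \/ Rmin x y = y) as Hm by (unfold Rmin; destruct Rle_dec; auto).
  assert (Rmax x y = x \/ Rmax x y = y) as HM by (unfold Rmax; destruct Rle_dec; auto).
  destruct a as [a| |]; destruct b as [b| |]; simpl in *; split; simpl; try tauto;
    destruct Hm as [Hm|Hm]; destruct HM as [HM|HM]; lra.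
Qed.

Lemma ex_derive_n_Derive_n f j k t :
  ex_derive_n f (k + j) t -> ex_derive_n (Derive_n f j) k t.
Proof.
  destruct k as [|k]; simpl; [auto|].
  intros H; apply ex_derive_ext with (Derive_n f (k + j)); [|exact H].
  intros; rewrite Derive_n_comp; reflexivity.
Qed.

Lemma continuity_pt_locally_bounded h x : continuity_pt h x ->
  exists d M, 0 < d /\ forall z, Rabs (z - x) < d -> Rabs (h z) <= M.
Proof.
  intros Hc; destruct (Hc 1 Rlt_0_1) as [d [Hd H]].
  exists d, (Rabs (h x) + 1); split; [exact Hd|]; intros z Hz.
  destruct (Req_dec z x) as [->|Hne]; [lra|].
  assert (Hdist : R_dist (h z) (h x) < 1) by (apply H; repeat split; auto).
  unfold R_dist in Hdist; pose proof (Rabs_triang_inv (h z) (h x)); lra.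
Qed.

Section SmoothTaylor.

Variable U : R -> Prop.
Hypothesis U_open : forall t, U t -> locally t U.

(* Coquelicot's [Taylor_Lagrange] needs [x < y]; the case [y < x] is reduced
   to it through [fun z => f (- z)]. *)
Lemma Taylor_Lagrange_unordered (f : R -> R) n x y :
  (forall k t, U t -> ex_derive_n f k t) ->
  (forall z, Rmin x y <= z <= Rmax x y -> U z) -> x <> y ->
  exists zeta, Rabs (zeta - x) < Rabs (y - x) /\
    f y = sum_f_R0 (fun m => (y - x)^m / INR (Factorial.fact m) * Derive_n f m x) n
          + (y - x)^(S n) / INR (Factorial.fact (S n)) * Derive_n f (S n) zeta.
Proof.
  intros f_smooth Hseg Hxy.
  destruct (Rlt_or_le x y) as [Hlt|Hle].
  - destruct (Taylor_Lagrange f n x y Hlt) as [z [Hz Heq]].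
    { intros t Ht k _; apply f_smooth, Hseg; rewrite Rmin_left, Rmax_right; lra. }
    exists z; split; [rewrite !Rabs_pos_eq; lra | exact Heq].
  - set (g := fun z => f (- z)).
    assert (Hg_loc : forall N w, Rmin x y <= w <= Rmax x y ->
              locally w (fun w' => forall k, (k <= N)%nat -> ex_derive_n f k w')).
    { intros N w Hw; eapply filter_imp; [|apply U_open, Hseg, Hw].
      intros w' Hw' k _; apply f_smooth, Hw'. }
    assert (HDg : forall m w, Rmin x y <= w <= Rmax x y ->
              Derive_n g m (- w) = (-1)^m * Derive_n f m w).
    { intros m w Hw; unfold g; rewrite Derive_n_comp_opp, Ropp_involutive; [reflexivity|].
      rewrite Ropp_involutive; apply Hg_loc, Hw. }
    destruct (Taylor_Lagrange g n (- x) (- y)) as [z [Hz Heq]]; [lra| |].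
    { intros t Ht k _; apply ex_derive_n_comp_opp, Hg_loc.
      rewrite Rmin_right, Rmax_left; lra. }
    exists (- z); split.
    { rewrite (Rabs_left (y - x)) by lra; rewrite Rabs_left1; lra. }
    unfold g at 1 in Heq; rewrite Ropp_involutive in Heq; rewrite Heq.
    assert (Hpow : forall m, (- y - - x)^m * (-1)^m = (y - x)^m).
    { intros m; rewrite <- Rpow_mult_distr.
      replace ((- y - - x) * -1) with (y - x) by ring; reflexivity. }
    assert (Hfact : forall m, INR (Factorial.fact m) <> 0)
      by (intros; apply not_0_INR, Factorial.fact_neq_0).
    f_equal.
    + apply sum_eq; intros m _; rewrite HDg, <- (Hpow m);
        [field; apply Hfact | rewrite Rmin_right, Rmax_left; lra].
    + rewrite <- (Ropp_involutive z) at 1; rewrite HDg, <- (Hpow (S n));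
        [field; apply Hfact | rewrite Rmin_right, Rmax_left; lra].
Qed.

Lemma Taylor_jet3 (f : R -> R) t0 t M d :
  (forall k t, U t -> ex_derive_n f k t) ->
  (forall z, Rmin t0 t <= z <= Rmax t0 t -> U z) -> t0 <> t ->
  (forall z, Rabs (z - t0) < d -> Rabs (Derive_n f 4 z) <= M) -> Rabs (t - t0) < d ->
  exists E F G, Rabs E <= M /\ Rabs F <= M /\ Rabs G <= M /\
    f t = f t0 + (t - t0) * (Derive_n f 1 t0 + (t - t0) * (Derive_n f 2 t0 / 2
            + (t - t0) * (Derive_n f 3 t0 / 6 + (t - t0) * E))) /\
    Derive_n f 1 t = Derive_n f 1 t0 + (t - t0) * (Derive_n f 2 t0
            + (t - t0) * (Derive_n f 3 t0 / 2 + (t - t0) * F)) /\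
    Derive_n f 2 t = Derive_n f 2 t0 + (t - t0) * (Derive_n f 3 t0 + (t - t0) * G).
Proof.
  intros f_smooth Hseg Hne Hbound Ht.
  assert (HM : forall z, Rabs (z - t0) < Rabs (t - t0) -> Rabs (Derive_n f 4 z) <= M)
    by (intros z Hz; apply Hbound; lra).
  assert (Df_smooth : forall j k t', U t' -> ex_derive_n (Derive_n f j) k t')
    by (intros; apply ex_derive_n_Derive_n, f_smooth; assumption).
  destruct (Taylor_Lagrange_unordered f 3 t0 t f_smooth Hseg Hne) as [z1 [Hz1 E1]].
  destruct (Taylor_Lagrange_unordered (Derive_n f 1) 2 t0 t (Df_smooth 1%nat) Hseg Hne)
    as [z2 [Hz2 E2]].
  destruct (Taylor_Lagrange_unordered (Derive_n f 2) 1 t0 t (Df_smooth 2%nat) Hseg Hne)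
    as [z3 [Hz3 E3]].
  exists (Derive_n f 4 z1 / 24), (Derive_n f 4 z2 / 6), (Derive_n f 4 z3 / 2).
  assert (Hdiv : forall z c, Rabs (z - t0) < Rabs (t - t0) -> 1 <= c ->
            Rabs (Derive_n f 4 z / c) <= M).
  { intros z c Hz Hc; unfold Rdiv; rewrite Rabs_mult, Rabs_inv, (Rabs_pos_eq c) by lra.
    pose proof (HM z Hz); pose proof (Rabs_pos (Derive_n f 4 z)).
    apply Rle_trans with (Rabs (Derive_n f 4 z)); [|assumption].
    rewrite <- (Rmult_1_r (Rabs (Derive_n f 4 z))) at 2.
    apply Rmult_le_compat_l; [assumption|].
    rewrite <- Rinv_1; apply Rinv_le_contravar; lra. }
  repeat split; try (apply Hdiv; [assumption | lra]).
  - rewrite E1; simpl; field.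
  - rewrite E2; cbn [sum_f_R0]; rewrite !Derive_n_comp; simpl; field.
  - rewrite E3; cbn [sum_f_R0]; rewrite !Derive_n_comp; simpl; field.
Qed.

End SmoothTaylor.

Lemma smooth_jet3_near a b h t0 :
  smooth_on (in_interval a b) h -> in_interval a b t0 ->
  exists d M, 0 < d /\ 0 <= M /\ forall t, in_interval a b t -> 0 < Rabs (t - t0) < d ->
    exists E F G, Rabs E <= M /\ Rabs F <= M /\ Rabs G <= M /\
      h t = h t0 + (t - t0) * (Derive_n h 1 t0 + (t - t0) * (Derive_n h 2 t0 / 2
              + (t - t0) * (Derive_n h 3 t0 / 6 + (t - t0) * E))) /\
      Derive_n h 1 t = Derive_n h 1 t0 + (t - t0) * (Derive_n h 2 t0
              + (t - t0) * (Derive_n h 3 t0 / 2 + (t - t0) * F)) /\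
      Derive_n h 2 t = Derive_n h 2 t0 + (t - t0) * (Derive_n h 3 t0 + (t - t0) * G).
Proof.
  intros Hh Ht0.
  assert (Hcont : continuity_pt (Derive_n h 4) t0)
    by (apply continuity_pt_filterlim, (ex_derive_continuous (Derive_n h 4)), (Hh 5%nat t0 Ht0)).
  destruct (continuity_pt_locally_bounded _ _ Hcont) as [d [M [Hd HM]]].
  exists d, (Rabs M); split; [exact Hd | split; [apply Rabs_pos|]].
  intros t Ht [Hpos Hlt].
  apply (Taylor_jet3 (in_interval a b) (@in_interval_locally a b) h t0 t (Rabs M) d Hh).
  - intros z Hz; exact (in_interval_between a b t0 t z Ht0 Ht Hz).
  - intros ->; rewrite Rminus_diag, Rabs_R0 in Hpos; lra.
  - intros z Hz; eapply Rle_trans; [apply HM, Hz | apply Rle_abs].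
  - exact Hlt.
Qed.

Lemma V3_eq u v : vx u = vx v -> vy u = vy v -> vz u = vz v -> u = v.
Proof.
  destruct u as [[u1 u2] u3], v as [[v1 v2] v3]; unfold vx, vy, vz; simpl.
  intros -> -> ->; reflexivity.
Qed.

Lemma vdot_self_ge0 v : 0 <= vdot v v.
Proof. unfold vdot; nra. Qed.

Lemma vdot_self_vnorm v r : vnorm v = r -> vdot v v = r^2.
Proof.
  intros <-; unfold vnorm; simpl; rewrite Rmult_1_r, sqrt_sqrt; [reflexivity|].
  apply vdot_self_ge0.
Qed.

Definition det (x y z : V3) : R := vdot x (vcross y z).

Definition vbounded (v : V3) (m : R) : Prop :=
  Rabs (vx v) <= m /\ Rabs (vy v) <= m /\ Rabs (vz v) <= m.

Lemma Rabs_add_le x y m1 m2 : Rabs x <= m1 -> Rabs y <= m2 -> Rabs (x + y) <= m1 + m2.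
Proof. intros; eapply Rle_trans; [apply Rabs_triang | lra]. Qed.

Lemma Rabs_sub_le x y m1 m2 : Rabs x <= m1 -> Rabs y <= m2 -> Rabs (x - y) <= m1 + m2.
Proof. intros; apply Rabs_add_le; [|rewrite Rabs_Ropp]; assumption. Qed.

Lemma Rabs_mult_le x y m1 m2 :
  Rabs x <= m1 -> Rabs y <= m2 -> Rabs (x * y) <= m1 * m2.
Proof.
  intros; rewrite Rabs_mult.
  apply Rmult_le_compat; try apply Rabs_pos; assumption.
Qed.

Lemma vbounded_mono v m1 m2 : vbounded v m1 -> m1 <= m2 -> vbounded v m2.
Proof. intros [h1 [h2 h3]] H; unfold vbounded; repeat split; lra. Qed.

Lemma vbounded_sub x y m1 m2 :
  vbounded x m1 -> vbounded y m2 -> vbounded (vsub x y) (m1 + m2).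
Proof.
  intros [h1 [h2 h3]] [k1 [k2 k3]]; cbv [vbounded vsub mkV]; cbn [vx vy vz fst snd] in *.
  repeat split; apply Rabs_sub_le; assumption.
Qed.

Lemma vbounded_scal c x m : vbounded x m -> vbounded (vscal c x) (Rabs c * m).
Proof.
  intros [h1 [h2 h3]]; cbv [vbounded vscal mkV]; cbn [vx vy vz fst snd] in *.
  repeat split; apply Rabs_mult_le; lra.
Qed.

Lemma vbounded_scal_contract c x m :
  Rabs c <= 1 -> 0 <= m -> vbounded x m -> vbounded (vscal c x) m.
Proof.
  intros Hc Hm Hx; eapply vbounded_mono; [apply vbounded_scal, Hx|].
  pose proof (Rabs_pos c); nra.
Qed.

Definition vsup (v : V3) : R := Rmax (Rabs (vx v)) (Rmax (Rabs (vy v)) (Rabs (vz v))).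

Lemma vbounded_vsup v : vbounded v (vsup v).
Proof.
  unfold vbounded, vsup; repeat split.
  - apply Rmax_l.
  - eapply Rle_trans; [apply Rmax_l | apply Rmax_r].
  - eapply Rle_trans; [apply Rmax_r | apply Rmax_r].
Qed.

Lemma vsup_ge0 v : 0 <= vsup v.
Proof. eapply Rle_trans; [apply Rabs_pos | apply (proj1 (vbounded_vsup v))]. Qed.

Lemma det_bound x y z m :
  vbounded x m -> vbounded y m -> vbounded z m -> Rabs (det x y z) <= 6 * m^3.
Proof.
  destruct x as [[x1 x2] x3], y as [[y1 y2] y3], z as [[z1 z2] z3].
  cbv [vbounded det vdot vcross mkV vx vy vz fst snd].
  intros [h1 [h2 h3]] [k1 [k2 k3]] [l1 [l2 l3]].
  replace (6 * m^3) with (m*(m*m + m*m) + m*(m*m + m*m) + m*(m*m + m*m)) by ring.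
  repeat first [ apply Rabs_sub_le | apply Rabs_add_le | apply Rabs_mult_le ];
    assumption.
Qed.

Definition vhorner (c r : V3) (s : R) : V3 := vadd c (vscal s r).

Lemma vbounded_vhorner c r s m1 m2 :
  vbounded c m1 -> vbounded r m2 -> Rabs s <= 1 -> 0 <= m2 ->
  vbounded (vhorner c r s) (m1 + m2).
Proof.
  intros [h1 [h2 h3]] Hr Hs Hm2.
  destruct (vbounded_scal_contract s r m2 Hs Hm2 Hr) as [k1 [k2 k3]].
  cbv [vbounded vhorner vadd mkV] in *; cbn [vx vy vz fst snd] in *.
  repeat split; apply Rabs_add_le; assumption.
Qed.

Section PlaneExpansion.

Variables (x0 u0 v0 w0 e f g : V3) (s : R).

(* The jets are the Taylor expansions
   x0 + s u0 + s^2/2 v0 + s^3/6 w0 + s^4 e,  u0 + s v0 + s^2/2 w0 + s^3 f  and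
   v0 + s w0 + s^2 g  in Horner form; the tails are the inner Horner factors.
   Each remainder below is a sum of at most seven determinants of tails, which
   is where the constant of [plane_remainders_bounded] comes from. *)

Definition pos_tail3 : V3 := vhorner (vscal (/6) w0) e s.
Definition pos_tail2 : V3 := vhorner (vscal (/2) v0) pos_tail3 s.
Definition pos_jet : V3 := vhorner x0 (vhorner u0 pos_tail2 s) s.

Definition vel_tail2 : V3 := vhorner (vscal (/2) w0) f s.
Definition vel_tail1 : V3 := vhorner v0 vel_tail2 s.
Definition vel_jet : V3 := vhorner u0 vel_tail1 s.

Definition acc_tail1 : V3 := vhorner w0 g s.
Definition acc_jet : V3 := vhorner v0 acc_tail1 s.

Definition rem_tangent : R :=
  det u0 v0 g + det u0 f v0 + det u0 vel_tail2 acc_tail1.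
Definition rem_normal : R :=
  det v0 u0 g + det v0 vel_tail1 acc_tail1.
Definition rem_const : R :=
  rem_tangent + det (vscal (/2) v0) u0 g + det e u0 v0 + det pos_tail3 u0 acc_tail1
  + det pos_tail2 (vsub vel_tail2 (vscal 2 pos_tail3)) acc_jet.

Lemma osc_plane_equation_expansion (a c : R) :
  vdot (vsub (vadd x0 (vadd (vscal a u0) (vscal c v0))) pos_jet)
       (vcross vel_jet acc_jet)
  = a * (s^2 * vdot (vcross u0 v0) w0 / 2 + s^3 * rem_tangent)
    + c * (- s * vdot (vcross u0 v0) w0 + s^2 * rem_normal)
    - (s^3 * vdot (vcross u0 v0) w0 / 6 + s^4 * rem_const).
Proof.
  cbv [rem_const rem_tangent rem_normal pos_jet pos_tail2 pos_tail3 vel_jet vel_tail1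
       vel_tail2 acc_jet acc_tail1 vhorner det vdot vcross vadd vsub vscal mkV
       vx vy vz fst snd].
  field.
Qed.

Variable m : R.
Hypotheses (Hu : vbounded u0 m) (Hv : vbounded v0 m) (Hw : vbounded w0 m)
  (He : vbounded e m) (Hf : vbounded f m) (Hg : vbounded g m)
  (Hs : Rabs s <= 1) (Hm : 0 <= m).

Lemma plane_remainders_bounded :
  Rabs rem_tangent <= 42 * (6 * m)^3 /\ Rabs rem_normal <= 42 * (6 * m)^3 /\
  Rabs rem_const <= 42 * (6 * m)^3.
Proof.
  assert (Hhalf : Rabs (/2) <= 1) by (rewrite Rabs_pos_eq; lra).
  assert (Hsixth : Rabs (/6) <= 1) by (rewrite Rabs_pos_eq; lra).
  assert (Hv2 : vbounded (vscal (/2) v0) m) by (apply vbounded_scal_contract; auto).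
  assert (Hw2 : vbounded (vscal (/2) w0) m) by (apply vbounded_scal_contract; auto).
  assert (Hw6 : vbounded (vscal (/6) w0) m) by (apply vbounded_scal_contract; auto).
  assert (Hp3 : vbounded pos_tail3 (m + m)) by (apply vbounded_vhorner; auto).
  assert (Hp2 : vbounded pos_tail2 (m + (m + m))) by (apply vbounded_vhorner; auto; lra).
  assert (Hl2 : vbounded vel_tail2 (m + m)) by (apply vbounded_vhorner; auto).
  assert (Hl1 : vbounded vel_tail1 (m + (m + m))) by (apply vbounded_vhorner; auto; lra).
  assert (Ha1 : vbounded acc_tail1 (m + m)) by (apply vbounded_vhorner; auto).
  assert (Ha : vbounded acc_jet (m + (m + m))) by (apply vbounded_vhorner; auto; lra).
  assert (Hdiff : vbounded (vsub vel_tail2 (vscal 2 pos_tail3)) (m + m + Rabs 2 * (m + m)))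
    by (apply vbounded_sub; [|apply vbounded_scal]; assumption).
  rewrite Rabs_pos_eq in Hdiff by lra.
  assert (H6 : forall x k, vbounded x k -> k <= 6 * m -> vbounded x (6 * m))
    by (intros; eapply vbounded_mono; eauto).
  assert (Hdet : forall x y z k1 k2 k3, vbounded x k1 -> vbounded y k2 -> vbounded z k3 ->
            k1 <= 6 * m -> k2 <= 6 * m -> k3 <= 6 * m ->
            Rabs (det x y z) <= 6 * (6 * m)^3)
    by (intros; apply det_bound; eapply H6; eauto).
  assert (Htan : Rabs rem_tangent <= 3 * (6 * (6 * m)^3)).
  { unfold rem_tangent; replace (3 * (6 * (6 * m)^3))
      with (6 * (6 * m)^3 + 6 * (6 * m)^3 + 6 * (6 * m)^3) by ring.
    apply Rabs_add_le; [apply Rabs_add_le|]; (eapply Hdet; [eassumption..| lra | lra | lra]). }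
  assert (0 <= 6 * (6 * m)^3) by (apply Rmult_le_pos; [lra | apply pow_le; lra]).
  repeat split; [lra| |].
  - unfold rem_normal; eapply Rle_trans; [apply Rabs_add_le|].
    1, 2: eapply Hdet; [eassumption..| lra | lra | lra].
    lra.
  - unfold rem_const; eapply Rle_trans.
    { apply Rabs_add_le; [apply Rabs_add_le; [apply Rabs_add_le; [apply Rabs_add_le|]|]|].
      1: exact Htan.
      all: eapply Hdet; [eassumption..| lra | lra | lra]. }
    lra.
Qed.

End PlaneExpansion.

Lemma osc_plane_equation_nonzero a b s D K RA RB RC :
  s <> 0 -> Rabs s * (64 * K) < Rabs D ->
  Rabs RA <= K -> Rabs RB <= K -> Rabs RC <= K ->
  a * (s^2 * D / 2 + s^3 * RB) + (a^2 + b^2) / 2 * (- s * D + s^2 * RC)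
    - (s^3 * D / 6 + s^4 * RA) <> 0.
Proof.
  intros Hs HsD HA HB HC Heq.
  set (Q := a^2 + b^2 + s^2).
  set (q := a^2 + b^2 - a * s + s^2 / 3).
  set (err := a * s^3 * RB + (a^2 + b^2) / 2 * s^2 * RC - s^4 * RA).
  set (sa := Rabs s).
  assert (HS : 0 < sa) by (apply Rabs_pos_lt, Hs).
  assert (HQ : 0 < Q) by (unfold Q; nra).
  assert (Hq : Q / 16 <= q)
    by (unfold Q, q; pose proof (pow2_ge_0 (a - 8 / 15 * s)); pose proof (pow2_ge_0 b); nra).
  assert (Hlead : -(D * s / 2) * q = - err)
    by (rewrite <- (Rplus_0_l (- err)), <- Heq; unfold q, err; field).
  assert (Hlead_abs : Rabs D * sa * Q / 32 <= Rabs err).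
  { rewrite <- (Rabs_Ropp err), <- Hlead, Rabs_mult, Rabs_Ropp, (Rabs_pos_eq q) by lra.
    unfold Rdiv; rewrite !Rabs_mult, Rabs_inv, (Rabs_pos_eq 2) by lra; fold sa.
    pose proof (Rabs_pos D); assert (0 <= Rabs D * sa) by nra; nra. }
  assert (Herr : Rabs err <= K * sa^2 * (2 * Q)).
  { set (aa := Rabs a).
    assert (Haa2 : aa^2 = a^2) by (unfold aa; apply pow2_abs).
    assert (Hsa2 : sa^2 = s^2) by (unfold sa; apply pow2_abs).
    assert (HAS : aa * sa <= (a^2 + s^2) / 2)
      by (pose proof (pow2_ge_0 (aa - sa)); nra).
    assert (Hb' : 0 <= (a^2 + b^2) / 2)
      by (pose proof (pow2_ge_0 a); pose proof (pow2_ge_0 b); lra).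
    assert (HK : 0 <= K) by (pose proof (Rabs_pos RA); lra).
    apply Rle_trans with (aa * sa^3 * K + (a^2 + b^2) / 2 * sa^2 * K + sa^4 * K).
    - unfold err; apply Rabs_sub_le; [apply Rabs_add_le|]; apply Rabs_mult_le; try assumption.
      + rewrite Rabs_mult, <- RPow_abs; apply Rle_refl.
      + rewrite Rabs_mult, <- RPow_abs, (Rabs_pos_eq ((a^2 + b^2) / 2)) by exact Hb'.
        apply Rle_refl.
      + rewrite <- RPow_abs; apply Rle_refl.
    - replace (aa * sa^3 * K + (a^2 + b^2) / 2 * sa^2 * K + sa^4 * K)
        with (K * sa^2 * (aa * sa + (a^2 + b^2) / 2 + sa^2)) by ring.
      apply Rmult_le_compat_l; [apply Rmult_le_pos; [exact HK | apply pow2_ge_0]|].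
      unfold Q; nra. }
  apply (Rlt_not_le _ _ HsD), (Rmult_le_reg_r (sa * Q)); [nra|].
  simpl in Herr; fold sa; lra.
Qed.

Lemma arclength_cderiv1_cderiv2_orthogonal a b xi t :
  smooth_curve_on (in_interval a b) xi -> arclength_on (in_interval a b) xi ->
  in_interval a b t -> vdot (cderiv 1 xi t) (cderiv 2 xi t) = 0.
Proof.
  intros [S1 [S2 S3]] Har Ht.
  set (speed2 := fun s => vdot (cderiv 1 xi s) (cderiv 1 xi s)).
  assert (Hsq : forall h, smooth_on (in_interval a b) h ->
            is_derive (fun s => Derive_n h 1 s * Derive_n h 1 s) t
                      (2 * (Derive_n h 1 t * Derive_n h 2 t))).
  { intros h Hh.
    pose proof (Derive_correct (Derive_n h 1) t (Hh 2%nat t Ht)) as Dh.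
    replace (2 * (Derive_n h 1 t * Derive_n h 2 t))
      with (Derive (Derive_n h 1) t * Derive_n h 1 t + Derive_n h 1 t * Derive (Derive_n h 1) t)
      by (simpl; ring).
    exact (is_derive_mult _ _ _ _ _ Dh Dh Rmult_comm). }
  assert (Hderiv : is_derive speed2 t (2 * vdot (cderiv 1 xi t) (cderiv 2 xi t))).
  { pose proof (is_derive_plus _ _ _ _ _ (is_derive_plus _ _ _ _ _ (Hsq _ S1) (Hsq _ S2))
                  (Hsq _ S3)) as H.
    set (x1 := fun s => vx (xi s)) in H; set (x2 := fun s => vy (xi s)) in H;
      set (x3 := fun s => vz (xi s)) in H.
    replace (2 * vdot (cderiv 1 xi t) (cderiv 2 xi t))
      with (plus (plus (2 * (Derive_n x1 1 t * Derive_n x1 2 t))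
                       (2 * (Derive_n x2 1 t * Derive_n x2 2 t)))
                 (2 * (Derive_n x3 1 t * Derive_n x3 2 t)))
      by (unfold x1, x2, x3; cbv [vdot cderiv mkV vx vy vz fst snd plus]; simpl; ring).
    exact H. }
  assert (Hconst : is_derive speed2 t 0).
  { apply (is_derive_ext_loc (fun _ => 1));
      [|exact (is_derive_const (K := R_AbsRing) (V := R_NormedModule) 1 t)].
    eapply filter_imp; [|apply in_interval_locally, Ht].
    intros s Hs; pose proof (vdot_self_vnorm _ _ (Har s Hs)) as Hunit.
    unfold speed2; simpl in *; lra. }
  apply is_derive_unique in Hderiv; apply is_derive_unique in Hconst; lra.
Qed.

Lemma osc_plane_coplanar xi t p :
  osc_plane xi t p ->
  vdot (vsub p (xi t)) (vcross (cderiv 1 xi t) (cderiv 2 xi t)) = 0.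
Proof.
  intros [al [be ->]]; unfold tangent, normal.
  generalize (xi t) (cderiv 1 xi t) (cderiv 2 xi t) (/ curvature xi t).
  intros x u v c; cbv [vdot vcross vadd vsub vscal mkV vx vy vz fst snd]; ring.
Qed.

(* A point [xi(t) + al T + be N] of the osculating plane lies on the osculating
   circle iff [al^2 + be^2 = 2 be / k]; as [be N = (be / k) xi''], its
   coefficient along [xi''] is then [(al^2 + be^2) / 2]. *)
Lemma osc_circle_coords xi t p :
  vnorm (cderiv 1 xi t) = 1 -> vdot (cderiv 1 xi t) (cderiv 2 xi t) = 0 ->
  0 < curvature xi t -> osc_circle xi t p ->
  exists al be, p = vadd (xi t) (vadd (vscal al (cderiv 1 xi t))
                                      (vscal ((al^2 + be^2) / 2) (cderiv 2 xi t))).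
Proof.
  intros Hu Huv Hk [[al [be Hp]] Hcirc]; exists al, be.
  apply vdot_self_vnorm in Hu; apply vdot_self_vnorm in Hcirc.
  assert (Hv : vdot (cderiv 2 xi t) (cderiv 2 xi t) = curvature xi t ^ 2)
    by (apply vdot_self_vnorm; reflexivity).
  unfold osc_center, tangent, normal in *; rewrite Hp in *.
  revert Hu Huv Hv Hcirc Hk.
  generalize (xi t) (cderiv 1 xi t) (cderiv 2 xi t) (curvature xi t).
  intros x u v k Hu Huv Hv Hcirc Hk.
  assert (Hrel : al^2 + be^2 = 2 * be / k).
  { replace (vdot _ _) with (al^2 * vdot u u + 2 * al * (be / k - / k^2) * vdot u v
                             + (be / k - / k^2)^2 * vdot v v) in Hcirc
      by (cbv [vdot vsub vadd vscal mkV vx vy vz fst snd]; field; lra).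
    rewrite Hu, Huv, Hv in Hcirc.
    replace ((be / k - / k^2)^2 * k^2) with ((be - / k)^2) in Hcirc by (field; lra).
    unfold Rdiv; nra. }
  apply V3_eq; cbv [vadd vscal mkV vx vy vz fst snd];
    replace ((al^2 + be^2) / 2) with (be / k) by (rewrite Hrel; field; lra); field; lra.
Qed.

Lemma curve_jets a b xi t0 :
  smooth_curve_on (in_interval a b) xi -> in_interval a b t0 ->
  exists d m, 0 < d /\ 0 <= m /\ vbounded (cderiv 1 xi t0) m /\
    vbounded (cderiv 2 xi t0) m /\ vbounded (cderiv 3 xi t0) m /\
    forall t, in_interval a b t -> 0 < Rabs (t - t0) < d ->
      exists e f g, vbounded e m /\ vbounded f m /\ vbounded g m /\
        xi t = pos_jet (xi t0) (cderiv 1 xi t0) (cderiv 2 xi t0) (cderiv 3 xi t0) e (t - t0) /\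
        cderiv 1 xi t = vel_jet (cderiv 1 xi t0) (cderiv 2 xi t0) (cderiv 3 xi t0) f (t - t0) /\
        cderiv 2 xi t = acc_jet (cderiv 2 xi t0) (cderiv 3 xi t0) g (t - t0).
Proof.
  intros [S1 [S2 S3]] Ht0.
  destruct (smooth_jet3_near _ _ _ _ S1 Ht0) as [d1 [M1 [Hd1 [HM1 J1]]]].
  destruct (smooth_jet3_near _ _ _ _ S2 Ht0) as [d2 [M2 [Hd2 [HM2 J2]]]].
  destruct (smooth_jet3_near _ _ _ _ S3 Ht0) as [d3 [M3 [Hd3 [HM3 J3]]]].
  set (m := M1 + M2 + M3 + vsup (cderiv 1 xi t0) + vsup (cderiv 2 xi t0)
            + vsup (cderiv 3 xi t0)).
  pose proof (vsup_ge0 (cderiv 1 xi t0)); pose proof (vsup_ge0 (cderiv 2 xi t0));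
    pose proof (vsup_ge0 (cderiv 3 xi t0)).
  assert (Hbound : forall v k, vbounded v k -> k <= m -> vbounded v m)
    by (intros; eapply vbounded_mono; eassumption).
  exists (Rmin d1 (Rmin d2 d3)), m.
  split; [repeat apply Rmin_glb_lt; assumption|].
  split; [unfold m; lra|].
  split; [|split]; [..|split]; try (eapply Hbound; [apply vbounded_vsup | unfold m; lra]).
  intros t Ht [Hpos Hlt].
  pose proof (Rmin_l d1 (Rmin d2 d3)); pose proof (Rmin_r d1 (Rmin d2 d3));
    pose proof (Rmin_l d2 d3); pose proof (Rmin_r d2 d3).
  destruct (J1 t Ht) as [E1 [F1 [G1 [hE1 [hF1 [hG1 [X1 [U1 V1]]]]]]]]; [lra|].
  destruct (J2 t Ht) as [E2 [F2 [G2 [hE2 [hF2 [hG2 [X2 [U2 V2]]]]]]]]; [lra|].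
  destruct (J3 t Ht) as [E3 [F3 [G3 [hE3 [hF3 [hG3 [X3 [U3 V3]]]]]]]]; [lra|].
  exists (mkV E1 E2 E3), (mkV F1 F2 F3), (mkV G1 G2 G3).
  split; [|split; [|split]];
    [unfold vbounded, m; cbn [vx vy vz mkV fst snd]; repeat split; lra ..|].
  cbv beta in X1, X2, X3.
  unfold cderiv; repeat split; apply V3_eq;
    cbv [pos_jet pos_tail2 pos_tail3 vel_jet vel_tail1 vel_tail2 acc_jet acc_tail1
         vhorner vadd vscal mkV];
    cbn [vx vy vz fst snd];
    rewrite ?X1, ?X2, ?X3, ?U1, ?U2, ?U3, ?V1, ?V2, ?V3; field.
Qed.

Theorem mainTheorem10 (a b : Rbar) (xi : R -> V3) (t0 : R) :
  smooth_curve_on (in_interval a b) xi ->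
  arclength_on (in_interval a b) xi ->
  (forall t, in_interval a b t -> 0 < curvature xi t) ->
  (forall t, in_interval a b t -> torsion xi t <> 0) ->
  in_interval a b t0 ->
  exists delta : R, 0 < delta /\
    forall t : R, in_interval a b t -> 0 < Rabs (t - t0) < delta ->
      forall p : V3, osc_circle xi t0 p -> ~ osc_plane xi t p.
Proof.
  intros Hsm Har Hk Htau Ht0.
  destruct (curve_jets a b xi t0 Hsm Ht0) as [d [m [Hd [Hm [Bu [Bv [Bw Hjet]]]]]]].
  set (D := vdot (vcross (cderiv 1 xi t0) (cderiv 2 xi t0)) (cderiv 3 xi t0)).
  assert (HD : 0 < Rabs D).
  { apply Rabs_pos_lt; intros HD0; apply (Htau t0 Ht0).
    unfold torsion; fold D; rewrite HD0; unfold Rdiv; ring. }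
  set (K := 42 * (6 * m)^3 + 1).
  assert (HK : 0 < K) by (pose proof (pow_le (6 * m) 3); unfold K; lra).
  exists (Rmin d (Rmin 1 (Rabs D / (64 * K)))); split.
  { repeat apply Rmin_glb_lt; [exact Hd | lra | apply Rdiv_lt_0_compat; lra]. }
  intros t Ht [Hpos Hlt] p Hcirc Hplane.
  pose proof (Rmin_l d (Rmin 1 (Rabs D / (64 * K)))).
  pose proof (Rmin_r d (Rmin 1 (Rabs D / (64 * K)))).
  pose proof (Rmin_l 1 (Rabs D / (64 * K))); pose proof (Rmin_r 1 (Rabs D / (64 * K))).
  destruct (osc_circle_coords xi t0 p (Har t0 Ht0)
              (arclength_cderiv1_cderiv2_orthogonal a b xi t0 Hsm Har Ht0)
              (Hk t0 Ht0) Hcirc) as [al [be ->]].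
  destruct (Hjet t Ht) as [e [f [g [Be [Bf [Bg [Ex [Eu Ev]]]]]]]]; [lra|].
  destruct (plane_remainders_bounded _ _ _ _ _ _ (t - t0) m Bu Bv Bw Be Bf Bg)
    as [Rtan [Rnor Rcst]]; [lra | exact Hm |].
  apply osc_plane_coplanar in Hplane.
  rewrite Ex, Eu, Ev, osc_plane_equation_expansion in Hplane; fold D in Hplane.
  revert Hplane; apply (osc_plane_equation_nonzero _ _ _ _ K); try (unfold K; lra).
  - intros Hs0; rewrite Hs0, Rabs_R0 in Hpos; lra.
  - apply Rlt_div_r; lra.
Qed.
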